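(* In the setting described in the context, let $v_1,\dots,v_6$ be pairwise distinct vertices of $H$ with $v_2v_3,v_4v_5,v_6v_1\in E_H$ and $v_1v_2,v_3v_4,v_5v_6\notin E_H$, with $\ell_{v_2v_3}=\ell_1$, $\ell_{v_4v_5}=\ell_2$, $\ell_{v_6v_1}=\ell_3$, and suppose $\alpha=(\ell_1\vee\ell_2\vee\ell_3)$ is a clause of $\phi_1$ arising from this triple of edges. Then for every edge $e$ of $H$ with $\ell_e=\ell_2$ there exist vertices $a,b,c,d$ of $H$ such that $v_1,v_2,a,b,c,d$ are pairwise distinct, $v_2a,bc,dv_1\in E_H$, $v_1v_2,ab,cd\notin E_H$, $e=bc$, and $\ell_{v_2a}=\ell_1$, $\ell_{bc}=\ell_2$, $\ell_{dv_1}=\ell_3$ (i.e. an $AP_6$ with base $v_1v_2$ and ceiling $e$ carrying the literals $\ell_1,\ell_2,\ell_3$ in this order).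
   Context: Let $P$ be a partial order on $U=\{u_1,\dots,u_n\}$ and $V=\{v'_1,\dots,v'_n\}$ a disjoint copy (the vertex names $v_1,\dots,v_6$ in the claim are arbitrary vertices of $H$). Let $\widetilde E$ be the set of pairs $u_iv'_j$ with NOT $u_i<_Pu_j$. $H$ is the split graph on $U\cup V$ with edge set $E_H=\widetilde E\cup\{vv':v,v'\in V,v\ne v'\}$. Two edges $e,e'$ of $H$ are in conflict if there are vertices $w_1,\dots,w_4$ (not necessarily distinct) with $e=w_2w_3$, $e'=w_4w_1$ and $w_1w_2,w_3w_4\notin E_H$. The conflict graph $H^*$ has vertex set $E_H$, adjacency = conflict. Assume $H^*$ bipartite, fix a proper 2-coloring $\chi_0$ (red/blue), let $C_1,\dots,C_k$ be its components with variables $x_1,\dots,x_k$, and for $e\in C_i$ set $\ell_e=x_i$ if $e$ is red, $\ell_e=\overline{x_i}$ if blue. $\phi_1$ contains, for every set of three edges $e,e',e''$ of $H$ for which there are vertices $w_1,\dots,w_6$ (not necessarily distinct) with $e=w_2w_3$, $e'=w_4w_5$, $e''=w_6w_1$ and $w_1w_2,w_3w_4,w_5w_6\notin E_H$, and with $\ell_e\ne\overline{\ell_{e'}}$, $\ell_{e'}\ne\overline{\ell_{e''}}$, $\ell_e\ne\overline{\ell_{e''}}$, the two clauses $(\ell_e\vee\ell_{e'}\vee\ell_{e''})$ and $(\overline{\ell_e}\vee\overline{\ell_{e'}}\vee\overline{\ell_{e''}})$, and no other clauses. *)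

From mathcomp Require Import all_boot.
Set Implicit Arguments. Unset Strict Implicit. Unset Printing Implicit Defensive.

(* Vertices of H: inl i = u_i (in U), inr j = v'_j (in V). *)
Definition Vx (n : nat) : finType := ('I_n + 'I_n)%type.

Section Graph.
Variables (n : nat) (P : rel 'I_n).

Definition ltP (i j : 'I_n) : bool := (i != j) && P i j.

Definition adj (x y : Vx n) : bool :=
  match x, y with
  | inl i, inr j => ~~ ltP i j
  | inr j, inl i => ~~ ltP i j
  | inr j, inr j' => j != j'
  | inl _, inl _ => false
  end.

Definition nonedge (x y : Vx n) : bool := (x != y) && ~~ adj x y.

Definition edge (x y : Vx n) : {set Vx n} := [set x; y].

Definition isEdge (e : {set Vx n}) : bool :=
  [exists x, exists y, adj x y && (e == edge x y)].

(* conflict relation = adjacency of H* (on the vertex set E_H) *)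
Definition conflict (e f : {set Vx n}) : bool :=
  [&& isEdge e, isEdge f &
   [exists w1, exists w2, exists w3, exists w4,
      [&& e == edge w2 w3, f == edge w4 w1, nonedge w1 w2 & nonedge w3 w4]]].

(* the literal l_e: variable = (a canonical representative of) the
   component of e in H*, sign = the color of e under chi *)
Definition lit (chi : {set Vx n} -> bool) (e : {set Vx n})
  : {set Vx n} * bool := (root conflict e, chi e).

Definition litneg (l : {set Vx n} * bool) : {set Vx n} * bool := (l.1, ~~ l.2).

Definition phi1_triple (chi : {set Vx n} -> bool) (e e' e'' : {set Vx n}) : Prop :=
  (exists w1 w2 w3 w4 w5 w6 : Vx n,
     [/\ [/\ e = edge w2 w3, e' = edge w4 w5 & e'' = edge w6 w1],
         [/\ isEdge e, isEdge e' & isEdge e''] &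
         [/\ nonedge w1 w2, nonedge w3 w4 & nonedge w5 w6]]) /\
  [/\ lit chi e <> litneg (lit chi e'),
      lit chi e' <> litneg (lit chi e'') &
      lit chi e <> litneg (lit chi e'')].

End Graph.

From mathcomp Require Import all_boot.
Set Implicit Arguments. Unset Strict Implicit. Unset Printing Implicit Defensive.

(* In H, U is independent and V is a clique, so the vertices of an alternating
   cycle (non-edge, edge, non-edge, ...) alternate between U and V; this is
   what separates the vertices of an AP6.  Edges at even distance in H* carry
   the same literal, so it suffices to move the ceiling bc of an AP6
   v1 v2 a b c d two conflicts at a time.  The clause conditions force the
   chords v2c and bv1 (otherwise bc would conflict with v2a or dv1 and two
   literals of the clause would be complementary).  For a ceiling d'a' in
   conflict with bc, the literals carried by these chords force in turn the
   edges v2a' and d'v1, with the literals l1 and l3, and a further conflict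
   of d'a' gives the new ceiling. *)

Section SplitGraph.
Variables (n : nat) (P : rel 'I_n).

Definition inU (x : Vx n) : bool := if x is inl _ then true else false.

Lemma adjC : symmetric (adj P).
Proof. by case=> i; case=> j //=; rewrite eq_sym. Qed.

Lemma adj_neq x y : adj P x y -> x != y.
Proof. by apply: contraTneq => ->; case: y => //= j; rewrite eqxx. Qed.

Lemma nonedgeC : symmetric (nonedge P).
Proof. by move=> x y; rewrite /nonedge eq_sym adjC. Qed.

Lemma inU_neq x y : inU x != inU y -> x != y.
Proof. by apply: contraNneq => ->. Qed.

Lemma adj_inU x y : adj P x y -> ~~ (inU x && inU y).
Proof. by case: x; case: y. Qed.

Lemma nonedge_inU x y : nonedge P x y -> inU x || inU y.
Proof.
by case: x => i; case: y => j; rewrite /nonedge //= negbK andbC;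
  case: eqP => // ->; rewrite eqxx.
Qed.

Lemma edgeC (x y : Vx n) : edge x y = edge y x.
Proof. by rewrite /edge setUC. Qed.

Lemma edge_inj (x y x' y' : Vx n) : edge x y = edge x' y' ->
  (x = x' /\ y = y') \/ (x = y' /\ y = x').
Proof.
move=> E.
have : y' \in edge x y by rewrite E !inE eqxx orbT.
have : x' \in edge x y by rewrite E !inE eqxx.
have : y \in edge x' y' by rewrite -E !inE eqxx orbT.
have : x \in edge x' y' by rewrite -E !inE eqxx.
rewrite !inE; case/orP=> /eqP ->; case/orP=> /eqP ->; rewrite ?eqxx //=.
- by move=> _ /orP [] /eqP ->; [left | right].
- by left.
- by right.
- by move=> /orP [] /eqP -> _; [left | right].
Qed.

Lemma isEdge_edge x y : adj P x y -> isEdge P (edge x y).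
Proof. by move=> xy; apply/existsP; exists x; apply/existsP; exists y; rewrite xy eqxx. Qed.

Lemma isEdge_adj x y : isEdge P (edge x y) -> adj P x y.
Proof.
case/existsP=> x' /existsP [y' /andP [xy' /eqP /edge_inj [] [-> ->] //]].
by rewrite adjC.
Qed.

Definition ap4 (x y z w : Vx n) : bool :=
  [&& adj P x y, nonedge P y z, adj P z w & nonedge P w x].

Definition ap6 (x1 x2 x3 x4 x5 x6 : Vx n) : bool :=
  [&& nonedge P x1 x2, adj P x2 x3, nonedge P x3 x4,
      adj P x4 x5, nonedge P x5 x6 & adj P x6 x1].

Lemma ap4_rev x y z w : ap4 x y z w = ap4 y x w z.
Proof.
rewrite /ap4 (adjC y) (adjC w) (nonedgeC x) (nonedgeC z).
by case: (nonedge P y z); case: (nonedge P w x); rewrite ?andbF.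
Qed.

Lemma ap4_inU x y z w : ap4 x y z w -> inU z = inU x /\ inU w = inU y.
Proof.
case/and4P=> /adj_inU xy /nonedge_inU yz /adj_inU zw /nonedge_inU wx.
by move: xy yz zw wx; case: (inU x); case: (inU y); case: (inU z); case: (inU w).
Qed.

Lemma ap6_inU x1 x2 x3 x4 x5 x6 : ap6 x1 x2 x3 x4 x5 x6 ->
  [/\ inU x2 = ~~ inU x1, inU x3 = inU x1, inU x4 = ~~ inU x1,
      inU x5 = inU x1 & inU x6 = ~~ inU x1].
Proof.
case/and5P=> /nonedge_inU h12 /adj_inU h23 /nonedge_inU h34 /adj_inU h45.
case/andP=> /nonedge_inU h56 /adj_inU h61.
move: h12 h23 h34 h45 h56 h61.
by case: (inU x1); case: (inU x2); case: (inU x3); case: (inU x4);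
   case: (inU x5); case: (inU x6).
Qed.

Lemma ap6_uniq x1 x2 x3 x4 x5 x6 :
  ap6 x1 x2 x3 x4 x5 x6 -> uniq [:: x1; x2; x3; x4; x5; x6].
Proof.
move=> h; have [s2 s3 s4 s5 s6] := ap6_inU h.
have opposite x y : inU y = ~~ inU x -> x != y.
  by move=> sxy; apply: inU_neq; rewrite sxy; case: (inU x).
(* Vertices at distance two are told apart by the vertex between them. *)
have apart z x y : ~~ adj P z x -> adj P z y -> x != y.
  by move=> zx; apply: contraTneq => <-.
case/and5P: h => /andP [n12 na12] a23 /andP [n34 na34] a45 /andP [/andP [n56 na56] a61].
have d13 : x1 != x3 by apply: (apart x2); rewrite // adjC.
have d35 : x3 != x5 by apply: (apart x4); rewrite // adjC.
have d15 : x1 != x5 by rewrite eq_sym; apply: (apart x6); rewrite // adjC.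
have d24 : x2 != x4 by rewrite eq_sym; apply: (apart x3); rewrite // adjC.
have d46 : x4 != x6 by rewrite eq_sym; apply: (apart x5); rewrite // adjC.
have d26 : x2 != x6 by apply: (apart x1); rewrite // adjC.
have d14 : x1 != x4 by apply: opposite.
have d25 : x2 != x5 by apply: opposite; rewrite s5 s2 negbK.
have d36 : x3 != x6 by apply: opposite; rewrite s6 s3.
have d16 : x1 != x6 by rewrite eq_sym (adj_neq a61).
by rewrite /= !inE !negb_or n12 d13 d14 d15 d16 (adj_neq a23) d24 d25 d26
  n34 d35 d36 (adj_neq a45) d46 n56.
Qed.

Lemma conflictP e f : reflect
  (exists x y z w, [/\ e = edge x y, f = edge z w & ap4 x y z w]) (conflict P e f).
Proof.
apply: (iffP and3P) => [[He Hf] | [x [y [z [w [-> -> /and4P [xy yz zw wx]]]]]]].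
  case/existsP=> w /existsP [x /existsP [y /existsP [z]]].
  case/and4P=> /eqP Ee /eqP Ef wx yz; exists x, y, z, w; split=> //.
  by rewrite /ap4 wx yz isEdge_adj -?Ee // isEdge_adj -?Ef.
split; rewrite ?isEdge_edge //; apply/existsP; exists w; apply/existsP; exists x.
by apply/existsP; exists y; apply/existsP; exists z; rewrite !eqxx wx yz.
Qed.

Lemma conflict_sym : symmetric (conflict P).
Proof.
move=> e f; apply/conflictP/conflictP=> -[x [y [z [w [-> -> /and4P [xy yz zw wx]]]]]];
  by exists z, w, x, y; split=> //; apply/and4P.
Qed.

Lemma conflict_edge_split b c f : conflict P (edge b c) f ->
  exists z w, f = edge z w /\ ap4 b c z w.
Proof.
case/conflictP=> x [y [z [w [/edge_inj [] [-> ->] -> bczw]]]]; first by exists z, w.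
by exists w, z; rewrite edgeC -ap4_rev.
Qed.

End SplitGraph.

Lemma connect_parity_ind (T : finType) (r : rel T) (c : T -> bool) (Q : T -> Prop) :
  (forall x y, r x y -> c x != c y) ->
  (forall x y z, Q x -> r x y -> r y z -> Q z) ->
  forall x y, Q x -> connect r x y -> c y = c x -> Q y.
Proof.
move=> c_proper Q2 x _ Qx /connectP [p xp ->].
suff : (c (last x p) = c x -> Q (last x p)) /\
       (c (last x p) != c x -> exists2 y, Q y & r y (last x p)) by case.
elim/last_ind: p xp => [|p z IHp] /=; first by split=> //; rewrite eqxx.
rewrite rcons_path last_rcons => /andP [/IHp [IHeq IHneq] rz].
have cz : c z = ~~ c (last x p).
  by move: (c_proper _ _ rz); case: (c z); case: (c (last x p)).
split=> [czx | czx].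
  have [y Qy ry] : exists2 y, Q y & r y (last x p).
    by apply: IHneq; rewrite -czx cz; case: (c (last x p)).
  exact: Q2 Qy ry rz.
exists (last x p) => //; apply: IHeq.
by move: czx; rewrite cz; case: (c (last x p)); case: (c x).
Qed.

Lemma litnegK n : involutive (@litneg n).
Proof. by case=> g b; rewrite /litneg negbK. Qed.

Section Literals.
Variables (n : nat) (P : rel 'I_n) (chi : {set Vx n} -> bool).
Hypothesis chi_proper : forall e f, conflict P e f -> chi e != chi f.

Lemma lit_conflict e f : conflict P e f -> lit P chi f = litneg (lit P chi e).
Proof.
move=> ef; have cs : connect_sym (conflict P) := sym_connect_sym (@conflict_sym n P).
rewrite /lit /litneg /=; congr pair.
  by apply/eqP; rewrite (root_connect cs) cs connect1.
by move: (chi_proper ef); case: (chi e); case: (chi f).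
Qed.

Lemma lit_ap4 x y z w : ap4 P x y z w ->
  lit P chi (edge z w) = litneg (lit P chi (edge x y)).
Proof.
by move=> h; apply: lit_conflict; apply/conflictP; exists x, y, z, w.
Qed.

(* Were [yz] a non-edge, [xy] and [zw] would be in conflict. *)
Lemma adj_of_lit x y z w : adj P x y -> adj P z w -> nonedge P w x -> y != z ->
  lit P chi (edge z w) != litneg (lit P chi (edge x y)) -> adj P y z.
Proof.
move=> xy zw wx yz; apply: contraNT => nyz; apply/eqP/lit_ap4.
by rewrite /ap4 xy zw wx /nonedge yz nyz.
Qed.

Section Ceiling.
Variables (v1 v2 : Vx n) (L1 L2 L3 : {set Vx n} * bool).
Hypotheses (L12 : L1 <> litneg L2) (L23 : L2 <> litneg L3).

Definition ap6_ceiling (g : {set Vx n}) : Prop :=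
  exists a b c d, [/\ ap6 P v1 v2 a b c d, g = edge b c &
    [/\ lit P chi (edge v2 a) = L1, lit P chi (edge b c) = L2 &
        lit P chi (edge d v1) = L3]].

Lemma ap6_chords a b c d : ap6 P v1 v2 a b c d ->
  lit P chi (edge v2 a) = L1 -> lit P chi (edge b c) = L2 ->
  lit P chi (edge d v1) = L3 ->
  [/\ adj P v2 c, adj P b v1, lit P chi (edge v2 c) = litneg L3 &
      lit P chi (edge b v1) = litneg L1].
Proof.
move=> h La Lb Ld; have := ap6_uniq h.
rewrite /= !inE !negb_or => /and5P [/and5P [_ _ nv1b _ _] /and4P [_ _ nv2c _] _ _ _].
case/and5P: h => n12 a2a nab abc /andP [ncd adv1].
have v2c : adj P v2 c.
  rewrite adjC; apply: (adj_of_lit abc a2a nab); first by rewrite eq_sym.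
  by rewrite La Lb; apply/eqP.
have bv1 : adj P b v1.
  rewrite adjC; apply: (adj_of_lit adv1 abc ncd nv1b).
  by rewrite Lb Ld; apply/eqP.
split=> //.
  by rewrite (@lit_ap4 d v1 v2 c) ?Ld // /ap4 adv1 n12 v2c ncd.
by rewrite -La (@lit_ap4 b v1 v2 a) ?litnegK // /ap4 bv1 n12 a2a nab.
Qed.

Lemma ap6_ceiling_conflict2 g f g' :
  ap6_ceiling g -> conflict P g f -> conflict P f g' -> ap6_ceiling g'.
Proof.
case=> a [b [c [d [h -> [La Lb Ld]]]]] gf fg'.
have [v2c bv1 Lv2c Lbv1] := ap6_chords h La Lb Ld.
have [d' [a' [Ef bcd'a']]] := conflict_edge_split gf; subst f.
have [b' [c' [Eg' d'a'b'c']]] := conflict_edge_split fg'; subst g'.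
have Lf : lit P chi (edge d' a') = litneg L2 by rewrite (lit_conflict gf) Lb.
have [s2 _ sb sc _] := ap6_inU h.
have [sd' sa'] := ap4_inU bcd'a'.
case/and4P: bcd'a' => _ ncd' ad'a' na'b.
case/and4P: d'a'b'c' => _ na'b' ab'c' nc'd'.
have n12 : nonedge P v1 v2 by case/and5P: h.
have v2a' : adj P v2 a'.
  rewrite adjC; apply: (adj_of_lit ad'a' v2c ncd').
    by apply: inU_neq; rewrite sa' sc s2; case: (inU v1).
  by rewrite Lv2c Lf litnegK; apply/eqP=> E; apply: L23; rewrite -E.
have d'v1 : adj P d' v1.
  rewrite adjC; apply: (adj_of_lit bv1 ad'a' na'b).
    by apply: inU_neq; rewrite sd' sb; case: (inU v1).
  by rewrite Lf Lbv1 litnegK; apply/eqP=> E; apply: L12; rewrite -E.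
exists a', b', c', d'; split=> //; first by apply/and5P; split=> //; apply/andP.
split.
- rewrite (@lit_ap4 b v1 v2 a') ?Lbv1 ?litnegK //.
  by rewrite /ap4 bv1 n12 v2a' na'b.
- by rewrite (lit_conflict fg') Lf litnegK.
- rewrite (@lit_ap4 v2 c d' v1) ?Lv2c ?litnegK //.
  by rewrite /ap4 v2c ncd' d'v1 n12.
Qed.

End Ceiling.

End Literals.

Unset Implicit Arguments.

Theorem lemma15 (n : nat) (P : rel 'I_n)
  (P_refl : reflexive P) (P_anti : antisymmetric P) (P_trans : transitive P)
  (chi : {set Vx n} -> bool)
  (chi_proper : forall e f, conflict P e f -> chi e != chi f)
  (v1 v2 v3 v4 v5 v6 : Vx n) :
  uniq [:: v1; v2; v3; v4; v5; v6] ->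
  adj P v2 v3 -> adj P v4 v5 -> adj P v6 v1 ->
  ~~ adj P v1 v2 -> ~~ adj P v3 v4 -> ~~ adj P v5 v6 ->
  phi1_triple P chi (edge v2 v3) (edge v4 v5) (edge v6 v1) ->
  forall e : {set Vx n}, isEdge P e ->
  lit P chi e = lit P chi (edge v4 v5) ->
  exists a b c d : Vx n,
    [/\ uniq [:: v1; v2; a; b; c; d],
        [/\ adj P v2 a, adj P b c & adj P d v1],
        [/\ ~~ adj P v1 v2, ~~ adj P a b & ~~ adj P c d],
        e = edge b c &
        [/\ lit P chi (edge v2 a) = lit P chi (edge v2 v3),
            lit P chi (edge b c) = lit P chi (edge v4 v5) &
            lit P chi (edge d v1) = lit P chi (edge v6 v1)]].
Proof.
move=> U a23 a45 a61 n12 n34 n56 [_ [L12 L23 _]] e _ Le.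
have base : ap6_ceiling P chi v1 v2 (lit P chi (edge v2 v3)) (lit P chi (edge v4 v5))
                        (lit P chi (edge v6 v1)) (edge v4 v5).
  exists v3, v4, v5, v6; split=> //.
  move: U; rewrite /= !inE !negb_or.
  case/and5P=> /and5P [d12 _ _ _ _] _ /and3P [d34 _ _] _ /andP [d56 _].
  by rewrite /ap6 /nonedge d12 n12 a23 d34 n34 a45 d56 n56 a61.
have cs : connect_sym (conflict P) := sym_connect_sym (@conflict_sym n P).
have [root_e chi_e] : root (conflict P) e = root (conflict P) (edge v4 v5) /\
                      chi e = chi (edge v4 v5) by case: Le.
have g0e : connect (conflict P) (edge v4 v5) e by rewrite -(root_connect cs) root_e.
have [a [b [c [d [h -> Ls]]]]] := connect_parity_ind chi_proper
  (ap6_ceiling_conflict2 chi_proper L12 L23) base g0e chi_e.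
exists a, b, c, d; split=> //; first exact: ap6_uniq h.
  by case/and5P: h => _ a2a _ abc /andP [_ adv1].
by case/and5P: h => /andP [_ ->] _ /andP [_ ->] _ /andP [/andP [_ ->] _].
Qed.
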